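(* Let $\rho=\sqrt2$ and $Z[\rho]=\{\pm z: z=\sum_{k=0}^n z_k\rho^k,\ n\ge0,\ z_k\in\{0,1\}\}$. Then $\mathbb{Z}$ is a proper subset of $Z[\rho]$. *)

From mathcomp Require Import all_boot all_order all_algebra.
From mathcomp Require Import reals.
Set Implicit Arguments. Unset Strict Implicit. Unset Printing Implicit Defensive.
Import Order.TTheory GRing.Theory Num.Theory.
Local Open Scope ring_scope.

Definition rho (R : realType) : R := Num.sqrt (2 : R).

Definition rho_digit_sum (R : realType) (n : nat) (z : 'I_n.+1 -> bool) : R :=
  \sum_(k < n.+1) ((z k : nat)%:R) * (rho R) ^+ k.

Definition in_Zrho (R : realType) (x : R) : Prop :=
  exists (n : nat) (z : 'I_n.+1 -> bool),
    x = @rho_digit_sum R n z \/ x = - @rho_digit_sum R n z.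

Definition is_integer (R : realType) (x : R) : Prop :=
  exists m : int, x = m%:~R.

From mathcomp Require Import all_boot all_order all_algebra.
From mathcomp Require Import reals.
From mathcomp Require Import lra zify.
Import Order.TTheory GRing.Theory Num.Theory.
Local Open Scope ring_scope.

(* Since rho^2 = 2, the digits at the even positions 0, 2, 4, ... of a
   rho-expansion form an ordinary binary expansion, so every natural number,
   and with the sign every integer, lies in Z[rho].  Conversely rho itself lies
   in Z[rho] but strictly between 1 and 2, hence is not an integer. *)

Section RhoExpansions.

Variable R : realType.

Lemma rho_ge0 : 0 <= rho R.
Proof. exact: sqrtr_ge0. Qed.

Lemma rho_sqr : rho R ^+ 2 = 2.
Proof. by rewrite sqr_sqrtr // ler0n. Qed.

Lemma rho_gt1 : 1 < rho R.
Proof. have := rho_ge0; have := rho_sqr; rewrite expr2; nra. Qed.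

Lemma rho_lt2 : rho R < 2.
Proof. have := rho_ge0; have := rho_sqr; rewrite expr2; nra. Qed.

Definition digits_cons2 {n} (b : bool) (z : 'I_n.+1 -> bool) (k : 'I_n.+3) :=
  match val k with 0%N => b | 1%N => false | k'.+2 => z (inord k') end.

Lemma rho_digit_sum_cons2 n (b : bool) (z : 'I_n.+1 -> bool) :
  rho_digit_sum R (digits_cons2 b z) = b%:R + 2 * rho_digit_sum R z.
Proof.
rewrite /rho_digit_sum 2!big_ord_recl mulr_sumr /= expr0 mulr1 mul0r add0r.
congr (_ + _); apply: eq_bigr => i _.
by rewrite /digits_cons2 /= /bump /= !add1n inord_val -addn2 exprD rho_sqr mulrA mulrC.
Qed.

Lemma nat_rho_digit_sum (N : nat) :
  exists n (z : 'I_n.+1 -> bool), N%:R = rho_digit_sum R z.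
Proof.
elim/ltn_ind: N => N IH.
have [->|N_gt0] := posnP N.
  by exists 0%N, (fun _ => false); rewrite /rho_digit_sum big_ord1 mul0r.
have [n [z ez]] := IH _ (ltn_Pdiv (isT : 1 < 2)%N N_gt0).
exists n.+2, (digits_cons2 (odd N) z).
by rewrite rho_digit_sum_cons2 -ez {1}(divn_eq N 2) modn2 natrD natrM mulrC addrC.
Qed.

Lemma int_in_Zrho (m : int) : in_Zrho (m%:~R : R).
Proof.
case: m => N; first by have [n [z eN]] := nat_rho_digit_sum N; exists n, z; left.
have [n [z eN]] := nat_rho_digit_sum N.+1.
by exists n, z; right; rewrite NegzE mulrNz -eN.
Qed.

Lemma rho_in_Zrho : in_Zrho (rho R).
Proof.
exists 1%N, (fun k : 'I_2 => val k == 1%N); left.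
by rewrite /rho_digit_sum big_ord_recl big_ord1 /= mul0r add0r mul1r expr1.
Qed.

Lemma rho_not_integer : ~ is_integer (rho R).
Proof.
move=> [m em]; have := rho_gt1; have := rho_lt2.
rewrite em ltr1z pmulrn ltr_int => m_lt2 m_gt1; lia.
Qed.

End RhoExpansions.

Theorem mainTheorem12 (R : realType) :
  (forall m : int, in_Zrho (m%:~R : R)) /\
  (exists x : R, in_Zrho x /\ ~ is_integer x).
Proof.
split; first exact: int_in_Zrho.
by exists (rho R); split; [exact: rho_in_Zrho | exact: rho_not_integer].
Qed.
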